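(* Let $n\ge 1$, $s\ge 1$, and let $A,B_1,\dots,B_s$ be real symmetric $n\times n$ matrices. Let $\mathcal{L}$ be the real Lie algebra generated by $A,B_1,\dots,B_s$, and let $\hat{\mathcal{L}}$ be the smallest ideal of $\mathcal{L}$ containing $B_1,\dots,B_s$. If $\mathcal{L}=gl(n,\mathbb{R})$ and $\operatorname{tr} B_k\neq 0$ for some $k\in\{1,\dots,s\}$, then $\hat{\mathcal{L}}=gl(n,\mathbb{R})$.
   Context: For matrices $A_1,\dots,A_k\in\mathbb{C}^{n\times n}$, the real Lie algebra generated by them is the smallest real vector space of matrices containing $A_1,\dots,A_k$ and closed under the commutator $[X,Y]=XY-YX$. $gl(n,\mathbb{R})$ denotes the Lie algebra of all real $n\times n$ matrices. *)

From HB Require Import structures.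
From mathcomp Require Import all_boot all_order all_algebra.
From mathcomp Require Import reals.
Set Implicit Arguments. Unset Strict Implicit. Unset Printing Implicit Defensive.
Import GRing.Theory.
Local Open Scope ring_scope.

Definition mxset (R : realType) (n : nat) := 'M[R]_n -> Prop.

Definition lie_br (R : realType) (n : nat) (X Y : 'M[R]_n) : 'M[R]_n :=
  X *m Y - Y *m X.

Definition is_subspace (R : realType) (n : nat) (S : mxset R n) : Prop :=
  S 0 /\ (forall X Y, S X -> S Y -> S (X + Y)) /\
  (forall (c : R) X, S X -> S (c *: X)).

Definition lie_closed (R : realType) (n : nat) (S : mxset R n) : Prop :=
  forall X Y, S X -> S Y -> S (lie_br X Y).

Definition lie_gen (R : realType) (n : nat) (G : mxset R n) : mxset R n :=
  fun X => forall S : mxset R n,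
    is_subspace S -> lie_closed S -> (forall Y, G Y -> S Y) -> S X.

Definition is_ideal (R : realType) (n : nat) (L I : mxset R n) : Prop :=
  is_subspace I /\ (forall X, I X -> L X) /\
  (forall X Y, L X -> I Y -> I (lie_br X Y)).

Definition ideal_gen (R : realType) (n : nat) (L G : mxset R n) : mxset R n :=
  fun X => forall I : mxset R n, is_ideal L I -> (forall Y, G Y -> I Y) -> I X.

Definition is_gl (R : realType) (n : nat) (S : mxset R n) : Prop :=
  forall X : 'M[R]_n, S X.

From HB Require Import structures.
From mathcomp Require Import all_boot all_order all_algebra.
From mathcomp Require Import reals.
Set Implicit Arguments. Unset Strict Implicit. Unset Printing Implicit Defensive.
Import GRing.Theory Num.Theory.
Local Open Scope ring_scope.

(* Since L = gl(n), the ideal Lhat is an ideal of gl(n) itself.  A non-scalar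
   element of such an ideal yields, after sandwiching between diagonal matrix
   units, an off-diagonal unit E_pq, and brackets with matrix units move it to
   every off-diagonal unit; these span sl(n), so one element of nonzero trace
   gives all of gl(n).  For n >= 2 some B_k is non-scalar: otherwise L would lie
   in the span of A and 1, which consists of symmetric matrices and contains no
   off-diagonal unit. *)

Section GlIdeal.
Variables (R : realType) (n : nat).

Definition gl_ideal (I : mxset R n) : Prop :=
  is_subspace I /\ forall X Y, I Y -> I (lie_br X Y).

Lemma ideal_of_gl (L I : mxset R n) : is_gl L -> is_ideal L I -> gl_ideal I.
Proof. by move=> hL [hI [_ hbr]]; split=> // X Y; apply: hbr. Qed.

Lemma lie_br_delta (a b c d : 'I_n) :
  lie_br (delta_mx a b) (delta_mx c d) =
  delta_mx a d *+ (b == c) - delta_mx c b *+ (d == a) :> 'M[R]_n.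
Proof. by rewrite /lie_br !mul_delta_mx_cond. Qed.

Lemma mul_delta_mx_sandwich (a b c d : 'I_n) (M : 'M[R]_n) :
  delta_mx a b *m M *m delta_mx c d = M b c *: delta_mx a d.
Proof.
apply/matrixP => i j; rewrite !mxE (bigD1 c) //= big1 => [|k /negbTE kc]; last first.
  by rewrite !mxE kc /= mulr0.
rewrite !mxE eqxx /= addr0 (bigD1 b) //= big1 => [|k /negbTE kb]; last first.
  by rewrite !mxE kb andbF mul0r.
rewrite !mxE !eqxx addr0 andbT.
by case: (i == a); case: (j == d); rewrite /= ?mulr1 ?mul1r ?mulr0 ?mul0r.
Qed.

Lemma lie_br_idempotent_corner (P Q X : 'M[R]_n) :
  P *m Q = 0 -> Q *m P = 0 -> P *m P = P ->
  lie_br P (lie_br Q X) + lie_br P (lie_br P (lie_br Q X)) = - (P *m X *m Q *+ 2).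
Proof.
move=> PQ QP PP; rewrite /lie_br.
rewrite !mulmxBr !mulmxBl !mulmxA PQ PP !mul0mx.
rewrite -!(mulmxA X Q P) QP !mulmx0.
rewrite -!(mulmxA _ Q P) QP !mulmx0.
rewrite -!(mulmxA _ P P) PP.
rewrite ?mulmxA ?PQ ?mul0mx !subr0 !sub0r !opprK.
have -> : P *m (Q *m X *m P) = 0 by rewrite !mulmxA PQ !mul0mx.
by rewrite subr0 mulr2n opprD addrACA addNr addr0.
Qed.

Variable I : mxset R n.
Hypothesis hI : gl_ideal I.

Lemma gl_ideal0 : I 0.
Proof. by case: hI => [[]]. Qed.

Lemma gl_idealD X Y : I X -> I Y -> I (X + Y).
Proof. by case: hI => [[_ []]] hD _ _; apply: hD. Qed.

Lemma gl_idealZ (c : R) X : I X -> I (c *: X).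
Proof. by case: hI => [[_ []]] _ hZ _; apply: hZ. Qed.

Lemma gl_idealN X : I X -> I (- X).
Proof. by rewrite -scaleN1r; apply: gl_idealZ. Qed.

Lemma gl_idealB X Y : I X -> I Y -> I (X - Y).
Proof. by move=> hX /gl_idealN; apply: gl_idealD. Qed.

Lemma gl_ideal_br X Y : I Y -> I (lie_br X Y).
Proof. by case: hI => _; apply. Qed.

Lemma gl_ideal_sum m (F : 'I_m -> 'M[R]_n) : (forall i, I (F i)) -> I (\sum_i F i).
Proof. by move=> hF; apply: (big_ind I) => //; [exact: gl_ideal0 | exact: gl_idealD]. Qed.

Lemma gl_idealZ_inv (c : R) X : c != 0 -> I (c *: X) -> I X.
Proof. by move=> c0 /(gl_idealZ c^-1); rewrite scalerA mulVf // scale1r. Qed.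

Lemma gl_ideal_corner (p q : 'I_n) X :
  p != q -> I X -> I (delta_mx p p *m X *m delta_mx q q).
Proof.
move=> pq hX; have qp : q != p by rewrite eq_sym.
have e := lie_br_idempotent_corner X (mul_delta_mx_0 _ p q pq)
  (mul_delta_mx_0 _ q p qp) (mul_delta_mx _ _ _).
apply: (gl_idealZ_inv (c := - 2%:R)); first by rewrite oppr_eq0 pnatr_eq0.
by rewrite scaleNr scaler_nat -e; apply: gl_idealD; do ! apply: gl_ideal_br.
Qed.

Lemma gl_ideal_delta_tr (i j : 'I_n) :
  i != j -> I (delta_mx i j) -> I (delta_mx j i).
Proof.
move=> ij /(gl_ideal_br (delta_mx j i)) /(gl_ideal_br (delta_mx j i)).
rewrite lie_br_delta !eqxx !mulr1n /lie_br mulmxBr mulmxBl.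
rewrite !mul_delta_mx_cond !eqxx (negbTE ij) !mulr1n !mulr0n !subr0 sub0r => h.
apply: (gl_idealZ_inv (c := - 2%:R)); first by rewrite oppr_eq0 pnatr_eq0.
by rewrite scaleNr scaler_nat mulr2n opprD.
Qed.

Lemma gl_ideal_delta_row (i j k : 'I_n) :
  k != j -> I (delta_mx i j) -> I (delta_mx k j).
Proof.
move=> kj /(gl_ideal_br (delta_mx k i)).
by rewrite lie_br_delta eqxx eq_sym (negbTE kj) mulr1n mulr0n subr0.
Qed.

Lemma gl_ideal_delta_col (j k l : 'I_n) :
  l != k -> I (delta_mx k j) -> I (delta_mx k l).
Proof.
move=> lk /(gl_ideal_br (delta_mx j l)) /gl_idealN.
by rewrite lie_br_delta eqxx (negbTE lk) mulr1n mulr0n sub0r opprK.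
Qed.

Lemma gl_ideal_offdiag (i j k l : 'I_n) :
  i != j -> k != l -> I (delta_mx i j) -> I (delta_mx k l).
Proof.
move=> ij + hij; rewrite eq_sym; case: (eqVneq k j) => [-> | kj] kl.
  exact: gl_ideal_delta_col kl (gl_ideal_delta_tr ij hij).
exact: gl_ideal_delta_col kl (gl_ideal_delta_row kj hij).
Qed.

End GlIdeal.

Section GlIdealOffdiag.
Variables (R : realType) (n : nat) (I : mxset R n.+1).
Hypothesis hI : gl_ideal I.
Hypothesis hoff : forall k l : 'I_n.+1, k != l -> I (delta_mx k l).

Lemma gl_ideal_sub_trace (X : 'M[R]_n.+1) : I (X - \tr X *: delta_mx 0 0).
Proof.
have hdiag k : I (delta_mx k k - delta_mx 0 0).
  have [->|k0] := eqVneq k 0; first by rewrite subrr; apply: gl_ideal0.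
  rewrite eq_sym in k0; move: (hoff k0) => /(gl_ideal_br hI (delta_mx k 0)).
  by rewrite lie_br_delta !eqxx !mulr1n.
pose F k l := if k == l then X k k *: (delta_mx k k - delta_mx 0 0)
              else X k l *: delta_mx k l.
have -> : X - \tr X *: delta_mx 0 0 = \sum_k \sum_l F k l.
  rewrite {1}(matrix_sum_delta X) /mxtrace scaler_suml -sumrB.
  apply: eq_bigr => k _.
  rewrite (bigD1 k) //= [in RHS](bigD1 k) //= /F eqxx scalerBr addrAC.
  by congr (_ + _); apply: eq_bigr => l lk; rewrite eq_sym (negbTE lk).
apply: gl_ideal_sum => // k; apply: gl_ideal_sum => // l; rewrite /F.
by case: eqVneq => [_|kl]; apply: gl_idealZ => //; apply: hoff.
Qed.

Lemma gl_ideal_full (Y : 'M[R]_n.+1) : I Y -> \tr Y != 0 -> forall X, I X.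
Proof.
move=> hY trY X.
have E00 : I (delta_mx 0 0).
  apply: (gl_idealZ_inv hI trY).
  by rewrite -[_ *: _](subKr Y); apply: gl_idealB => //; apply: gl_ideal_sub_trace.
by rewrite -(subrK (\tr X *: delta_mx 0 0) X); apply: gl_idealD => //;
  [apply: gl_ideal_sub_trace | apply: gl_idealZ].
Qed.

End GlIdealOffdiag.

Lemma gl_ideal_nonscalar (R : realType) (n : nat) (I : mxset R n.+1) (M : 'M[R]_n.+1) :
  gl_ideal I -> I M -> ~~ is_scalar_mx M ->
  forall p q : 'I_n.+1, p != q -> I (delta_mx p q).
Proof.
move=> hI hM nsc p q pq.
suff [i [j [ij hij]]] : exists i j : 'I_n.+1, i != j /\ I (delta_mx i j).
  exact: gl_ideal_offdiag ij pq hij.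
pose witness (ij : 'I_n.+1 * 'I_n.+1) :=
  (ij.1 != ij.2) && ((M ij.1 ij.2 != 0) || (M ij.1 ij.1 != M ij.2 ij.2)).
case: (pickP witness) => [[i j] /andP[/= ij /orP[Mij | Mii]] | scal].
- exists i, j; split=> //; apply: (gl_idealZ_inv hI Mij).
  by rewrite -mul_delta_mx_sandwich; apply: gl_ideal_corner.
- exists i, j; split=> //; apply: (gl_idealZ_inv (c := M j j - M i i) hI).
    by rewrite subr_eq0 eq_sym.
  have := gl_ideal_corner hI ij (gl_ideal_br hI (delta_mx i j) hM).
  rewrite /lie_br mulmxBr mulmxBl !mulmxA mul_delta_mx -(mulmxA _ (delta_mx i j)).
  by rewrite mul_delta_mx !mul_delta_mx_sandwich -scalerBl.
- case/negP: nsc; apply/is_scalar_mxP; exists (M 0 0); apply/matrixP => i j; rewrite mxE.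
  have [<-|ij] := eqVneq i j; last first.
    by move: (scal (i, j)); rewrite /witness /= ij /= => /norP[/negbNE/eqP].
  have [->|i0] := eqVneq i 0; first by rewrite mulr1n.
  by move: (scal (i, 0)); rewrite /witness /= i0 /= => /norP[_ /negbNE/eqP ->].
Qed.

Section Pencil.
Variables (R : realType) (n : nat) (A : 'M[R]_n).

Definition pencil : mxset R n := fun Z => exists c d, Z = c *: A + d%:M.

Lemma pencil_subspace : is_subspace pencil.
Proof.
split; first by exists 0, 0; rewrite scale0r add0r raddf0.
split=> [U V [c [d ->]] [c' [d' ->]] | a U [c [d ->]]].
  by exists (c + c'), (d + d'); rewrite scalerDl raddfD /= addrACA.
by exists (a * c), (a * d); rewrite scalerDr scalerA scale_scalar_mx.
Qed.

Lemma pencil_comm U V : pencil U -> pencil V -> comm_mx U V.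
Proof.
move=> [c [d ->]] [c' [d' ->]].
have comm_A : comm_mx A (c *: A + d%:M).
  rewrite -mul_scalar_mx; apply: comm_mxD; last exact: comm_mx_scalar.
  by apply: comm_mxM; [exact: comm_mx_scalar | exact: comm_mx_refl].
rewrite -[c' *: A]mul_scalar_mx; apply: comm_mxD; last exact: comm_mx_scalar.
by apply: comm_mxM; [exact: comm_mx_scalar | exact: comm_mx_sym].
Qed.

Lemma pencil_lie_closed : lie_closed pencil.
Proof.
move=> U V hU hV; rewrite /lie_br (pencil_comm hU hV) subrr.
by case: pencil_subspace.
Qed.

Lemma lie_gen_pencil (G : mxset R n) :
  (forall Y, G Y -> pencil Y) -> forall X, lie_gen G X -> pencil X.
Proof. by move=> hG X; apply; [exact: pencil_subspace | exact: pencil_lie_closed |]. Qed.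

Lemma pencil_sym Z : A^T = A -> pencil Z -> Z^T = Z.
Proof. by move=> hA [c [d ->]]; rewrite linearD linearZ /= hA tr_scalar_mx. Qed.

End Pencil.

Lemma trmx_delta_neq (R : realType) (n : nat) (p q : 'I_n) :
  p != q -> (delta_mx p q : 'M[R]_n)^T != delta_mx p q.
Proof.
move=> pq; rewrite trmx_delta; apply/eqP => /matrixP /(_ p q).
by rewrite !mxE !eqxx (negbTE pq) eq_sym (negbTE pq) /= => /eqP; rewrite eq_sym oner_eq0.
Qed.

Theorem lemma2p2 (R : realType) (n s : nat) (hn : (0 < n)%N) (hs : (0 < s)%N)
  (A : 'M[R]_n) (B : 'I_s -> 'M[R]_n)
  (hA : A^T = A) (hB : forall k, (B k)^T = B k) :
  let L := lie_gen (fun X => X = A \/ exists k, X = B k) in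
  let Lhat := ideal_gen L (fun X => exists k, X = B k) in
  is_gl L -> (exists k, \tr (B k) != 0) -> is_gl Lhat.
Proof.
case: n hn A B hA hB => [//|n] _ A B hA _ L Lhat hL [k trBk] X I hIL IB.
have hI := ideal_of_gl hL hIL.
have IB' j : I (B j) by apply: IB; exists j.
apply: (gl_ideal_full hI _ (IB' k) trBk) => p q pq.
have [/existsP[j nsc] | /existsPn scal] := boolP [exists j, ~~ is_scalar_mx (B j)].
  exact: gl_ideal_nonscalar hI (IB' j) nsc p q pq.
have L_pencil : forall Z, L Z -> pencil A Z.
  apply: lie_gen_pencil => _ [-> | [j ->]]; first by exists 1, 0; rewrite scale1r raddf0 addr0.
  by have /negPn/is_scalar_mxP[b ->] := scal j; exists 0, b; rewrite scale0r add0r.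
have := trmx_delta_neq R pq.
by rewrite (pencil_sym hA (L_pencil _ (hL (delta_mx p q)))) eqxx.
Qed.
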